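(* Reduction Rule 2 is safe: if \((G',k')\) is obtained from an instance \((G,k)\) of Vertex Cover by applying Reduction Rule 2, then \(k'+MM(G')-2LP(G')\leq k+MM(G)-2LP(G)\).
   Context: All graphs are finite, undirected and simple. An instance of Vertex Cover is a pair \((G,k)\), \(k\in\mathbb{N}\). \(MM(G)\) is the size of a maximum matching. \(LPVC(G)\) is the LP: minimize \(\sum_v x_v\) subject to \(x_u+x_v\ge1\) for each edge \(\{u,v\}\) and \(0\le x_v\le1\); \(LP(G)\) is its optimum value. For \(X\subseteq V(G)\), \(N(X)\) is the set of vertices outside \(X\) adjacent to some vertex of \(X\); for an independent set \(Z\), \(\mathrm{surplus}(Z)=|N(Z)|-|Z|\). Reduction Rule 2 applies to \((G,k)\) when (i) the all-\(\frac12\) assignment is the unique optimum solution of \(LPVC(G)\), and (ii) there is an independent set \(Z\subseteq V(G)\) with \(\mathrm{surplus}(Z)=1\) such that \(N(Z)\) is not an independent set in \(G\); it then outputs \(G'=G[V(G)\setminus(Z\cup N(Z))]\) and \(k'=k-|N(Z)|\). *)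

From HB Require Import structures.
From mathcomp Require Import all_boot all_order all_algebra.
From mathcomp Require Import reals.
Set Implicit Arguments. Unset Strict Implicit. Unset Printing Implicit Defensive.
Import Order.TTheory GRing.Theory Num.Theory.
Local Open Scope ring_scope.

(* A finite simple graph G is given by a finite vertex set V : {set T} of a
   finType T together with a symmetric irreflexive adjacency relation e : rel T;
   the edges of G are the pairs {u,v} with u, v in V and e u v.
   The induced subgraph G[W] (W \subset V) is (W, e). *)

Section Graph.
Variable T : finType.
Variable e : rel T.

Definition simple_graph : Prop := symmetric e /\ irreflexive e.

Definition independent (V Z : {set T}) : bool :=
  (Z \subset V) && [forall u in Z, forall v in Z, ~~ e u v].

Definition nbh (V X : {set T}) : {set T} :=
  [set v in V :\: X | [exists u in X, e u v]].

(* a matching: a set of (oriented representatives of) edges of G, pairwise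
   vertex-disjoint *)
Definition is_matching (V : {set T}) (M : {set T * T}) : bool :=
  [forall p in M, [&& p.1 \in V, p.2 \in V & e p.1 p.2]] &&
  [forall p in M, forall q in M,
      (p != q) ==> [disjoint [set p.1; p.2] & [set q.1; q.2]]].

Definition MM (V : {set T}) : nat :=
  \max_(M : {set T * T} | is_matching V M) #|M|.

Variable R : realType.

Definition lpvc_feasible (V : {set T}) (x : T -> R) : Prop :=
  (forall v, v \in V -> 0 <= x v <= 1) /\
  (forall u v, u \in V -> v \in V -> e u v -> 1 <= x u + x v).

Definition lp_obj (V : {set T}) (x : T -> R) : R := \sum_(v in V) x v.

Definition lpvc_optimal (V : {set T}) (x : T -> R) : Prop :=
  lpvc_feasible V x /\ forall y, lpvc_feasible V y -> lp_obj V x <= lp_obj V y.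

Definition is_LP_value (V : {set T}) (r : R) : Prop :=
  exists2 x, lpvc_optimal V x & lp_obj V x = r.

(* the all-1/2 assignment is the unique optimum of LPVC(G)
   (solutions compared on the vertices of G) *)
Definition half_unique_opt (V : {set T}) : Prop :=
  lpvc_optimal V (fun _ => 2^-1) /\
  forall y, lpvc_optimal V y -> forall v, v \in V -> y v = 2^-1.

End Graph.

(* Write N = N(Z) and G' = G - (Z u N), so that k' = k - |N| and LP(G) = |V|/2.
   Lowering the all-1/2 assignment to 0 on an independent S and raising it to 1
   on N(S) is feasible, so optimality of all-1/2 gives |N(S)| >= |S|; by Hall's
   theorem Z can be matched into N, and MM(G) >= MM(G') + |Z|.  Conversely, a
   half-integral feasible solution y of LPVC(G') of value at most LP(G'),
   extended by 0 on Z and 1 on N, is feasible for G and is not all-1/2, so by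
   uniqueness |N| + val(y) > |V|/2; as 2 val(y) is an integer and |N| = |Z| + 1,
   this gives 2 LP(G') >= |V(G')|. *)

From HB Require Import structures.
From mathcomp Require Import all_boot all_order all_algebra.
From mathcomp Require Import reals.
From mathcomp Require Import lra zify.
Set Implicit Arguments. Unset Strict Implicit. Unset Printing Implicit Defensive.
Import Order.TTheory GRing.Theory Num.Theory.

Section Hall.
Variables (T : finType) (e : rel T).

Definition neighbours (A S : {set T}) : {set T} :=
  [set v in A | [exists u in S, e u v]].

Definition matching_into (Z A : {set T}) (f : T -> T) : Prop :=
  (forall z, z \in Z -> f z \in A /\ e z (f z)) /\ {in Z &, injective f}.

Definition hall_condition (Z A : {set T}) : Prop :=
  forall S : {set T}, S \subset Z -> #|S| <= #|neighbours A S|.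

Lemma setUD_sub (A B : {set T}) : A \subset B -> A :|: (B :\: A) = B.
Proof.
by move=> sAB; apply/setP=> v; rewrite !inE; case: (boolP (v \in A)) => // /(subsetP sAB).
Qed.

Lemma neighbours_sub (A S : {set T}) : neighbours A S \subset A.
Proof. by apply/subsetP=> v; rewrite inE => /andP[]. Qed.

Lemma matching_into_glue (Z1 Z2 A1 A2 : {set T}) (f1 f2 : T -> T) :
  [disjoint A1 & A2] -> matching_into Z1 A1 f1 -> matching_into Z2 A2 f2 ->
  matching_into (Z1 :|: Z2) (A1 :|: A2)
    (fun z => if z \in Z1 then f1 z else f2 z).
Proof.
move=> dA [f1A f1I] [f2A f2I]; split=> [z|x y].
  rewrite inE; case: ifP => [/f1A[fA ->]|_ /= /f2A[fA ->]]; by rewrite inE fA ?orbT.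
rewrite !inE; case: ifP => x1; case: ifP => y1 /= x2 y2.
- exact: f1I.
- move=> fxy; have [/(disjointFr dA) + _] := f1A x x1.
  by rewrite fxy; have [-> _] := f2A y y2.
- move=> fxy; have [/(disjointFr dA) + _] := f1A y y1.
  by rewrite -fxy; have [-> _] := f2A x x2.
- exact: f2I.
Qed.

Lemma hall_condition_neighbours (Z A S : {set T}) :
  hall_condition Z A -> S \subset Z -> hall_condition S (neighbours A S).
Proof.
move=> hH sSZ S' sS'S; apply: leq_trans (hH S' (subset_trans sS'S sSZ)) _.
apply/subset_leq_card/subsetP=> v; rewrite !inE => /andP[vA /existsP[u /andP[uS' euv]]].
rewrite vA /=; apply/andP; split; apply/existsP; exists u;
  by rewrite euv andbT ?(subsetP sS'S u uS').
Qed.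

Lemma hall_condition_tight (Z A S : {set T}) :
  hall_condition Z A -> S \subset Z -> #|neighbours A S| <= #|S| ->
  hall_condition (Z :\: S) (A :\: neighbours A S).
Proof.
move=> hH sSZ tight S' sS'.
have dSS' : [disjoint S & S'].
  by rewrite disjoint_sym (disjointWl sS') // disjoints_subset subsetDr.
have grow : #|S| + #|S'| <= #|neighbours A (S :|: S')|.
  rewrite -cardsUI (disjoint_setI0 dSS') cards0 addn0; apply: hH.
  by rewrite subUset sSZ (subset_trans sS' (subsetDl _ _)).
suff sub : neighbours A (S :|: S') \subset
           neighbours A S :|: neighbours (A :\: neighbours A S) S'.
  by move: (subset_leq_card sub) (cardsUI (neighbours A S)
    (neighbours (A :\: neighbours A S) S')); lia.
apply/subsetP=> v; rewrite !inE => /andP[vA /existsP[u /andP[]]].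
rewrite inE => /orP[uS|uS'] euv.
  by rewrite vA; apply/orP; left; apply/existsP; exists u; rewrite uS.
rewrite vA /=; case: [exists u in S, e u v] => //=.
by apply/existsP; exists u; rewrite uS'.
Qed.

Lemma hall_condition_slack (Z A : {set T}) (z0 a0 : T) :
  hall_condition Z A ->
  (forall S : {set T}, S \subset Z -> S != set0 -> S != Z -> #|S| < #|neighbours A S|) ->
  z0 \in Z -> hall_condition (Z :\ z0) (A :\ a0).
Proof.
move=> hH slack z0Z S sS.
have [->|/set0Pn[s sS0]] := eqVneq S set0; first by rewrite cards0.
have sSZ : S \subset Z := subset_trans sS (subsetDl _ _).
have nSZ : S != Z.
  by apply: contraTneq z0Z => <-; apply/negP => /(subsetP sS); rewrite !inE eqxx.
have nS0 : S != set0 by apply/set0Pn; exists s.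
have sub : neighbours A S \subset a0 |: neighbours (A :\ a0) S.
  by apply/subsetP=> v; rewrite !inE => /andP[-> ->]; rewrite !andbT orbN.
move: (slack S sSZ nS0 nSZ) (subset_leq_card sub); rewrite cardsU1.
by case: (_ \notin _) => /=; lia.
Qed.

Theorem hall (Z A : {set T}) : hall_condition Z A -> exists f, matching_into Z A f.
Proof.
have [n] := ubnP #|Z|; elim: n => // n IH in Z A * => ltZn hH.
have [->|/set0Pn[z0 z0Z]] := eqVneq Z set0; first by exists id; split=> [z|]; rewrite ?inE.
have [tight|slack] := boolP [exists S : {set T},
  [&& S \subset Z, S != set0, S != Z & #|neighbours A S| <= #|S|]].
- have /existsP[S /and4P[sSZ nS0 nSZ tS]] := tight.
  have ltSZ : #|S| < #|Z| by apply: proper_card; rewrite properEneq nSZ.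
  have [f1 m1] := IH S (neighbours A S) (leq_trans ltSZ ltZn)
                    (hall_condition_neighbours hH sSZ).
  have [f2 m2] : exists f, matching_into (Z :\: S) (A :\: neighbours A S) f.
    apply: IH (hall_condition_tight hH sSZ tS).
    rewrite cardsD (setIidPr sSZ); move: nS0; rewrite -card_gt0; lia.
  have dA : [disjoint neighbours A S & A :\: neighbours A S].
    by rewrite disjoint_sym disjoints_subset subsetDr.
  exists (fun z => if z \in S then f1 z else f2 z).
  rewrite -(setUD_sub sSZ) -(setUD_sub (neighbours_sub A S)).
  exact: matching_into_glue dA m1 m2.
- have [a0 a0N] : exists a0, a0 \in neighbours A [set z0].
    by apply/set0Pn; rewrite -card_gt0; have := hH [set z0]; rewrite sub1set cards1; apply.
  have [f' m'] : exists f, matching_into (Z :\ z0) (A :\ a0) f.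
    apply: IH; first by move: ltZn; rewrite (cardsD1 z0 Z) z0Z.
    apply: hall_condition_slack z0Z => // S sSZ nS0 nSZ; rewrite ltnNge.
    by apply: contra slack => tS; apply/existsP; exists S; rewrite sSZ nS0 nSZ.
  have m0 : matching_into [set z0] [set a0] (fun _ => a0).
    move: a0N; rewrite !inE => /andP[_ /existsP[u /andP[]]]; rewrite inE => /eqP-> ez0a0.
    by split=> [z|x y]; rewrite !inE => /eqP->; rewrite ?eqxx ?ez0a0 // => /eqP->.
  have a0A : a0 \in A by move: a0N; rewrite inE => /andP[].
  exists (fun z => if z \in [set z0] then a0 else f' z).
  rewrite -(setD1K z0Z) -(setD1K a0A).
  by apply: matching_into_glue m0 m'; rewrite disjoints1 setD11.
Qed.

End Hall.

Section Matchings.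
Variables (T : finType) (e : rel T).

Lemma disjoint_set2 (a b : T) (C : {set T}) :
  [disjoint [set a; b] & C] = (a \notin C) && (b \notin C).
Proof. by rewrite disjoints_subset subUset !sub1set !inE. Qed.

Lemma matching_le_MM (V : {set T}) (M : {set T * T}) :
  is_matching e V M -> #|M| <= MM e V.
Proof. exact: leq_bigmax_cond. Qed.

Lemma MM_attained (V : {set T}) : exists2 M, is_matching e V M & #|M| = MM e V.
Proof.
have : 0 < #|is_matching e V|.
  by apply/card_gt0P; exists set0; apply/andP; split; apply/forall_inP => p; rewrite inE.
move=> /(eq_bigmax_cond (fun M : {set T * T} => #|M|))[M Mm hM].
by exists M; rewrite // /MM hM.
Qed.

Lemma is_matchingS (V W : {set T}) (M : {set T * T}) :
  V \subset W -> is_matching e V M -> is_matching e W M.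
Proof.
move=> sVW /andP[/forall_inP ME D]; apply/andP; split => //.
by apply/forall_inP => p /ME /and3P[p1 p2 ->]; rewrite !(subsetP sVW).
Qed.

Lemma is_matchingU (V : {set T}) (M1 M2 : {set T * T}) :
  is_matching e V M1 -> is_matching e V M2 ->
  (forall p q, p \in M1 -> q \in M2 -> [disjoint [set p.1; p.2] & [set q.1; q.2]]) ->
  is_matching e V (M1 :|: M2).
Proof.
move=> /andP[/forall_inP E1 /forall_inP D1] /andP[/forall_inP E2 /forall_inP D2] D12.
apply/andP; split.
  by apply/forall_inP => p; rewrite inE => /orP[/E1|/E2].
apply/forall_inP => p; rewrite inE => pM; apply/forall_inP => q; rewrite inE => qM.
apply/implyP => npq; case/orP: pM => pM; case/orP: qM => qM.
- exact: (implyP (forall_inP (D1 p pM) q qM)).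
- exact: D12.
- by rewrite disjoint_sym; apply: D12.
- exact: (implyP (forall_inP (D2 p pM) q qM)).
Qed.

Lemma is_matching_graph (V Z A : {set T}) (f : T -> T) :
  Z \subset V -> A \subset V -> [disjoint Z & A] -> matching_into e Z A f ->
  is_matching e V [set (z, f z) | z in Z].
Proof.
move=> ZV AV dZA [fA fI]; apply/andP; split.
  apply/forall_inP => _ /imsetP[z zZ ->] /=; have [fzA ->] := fA z zZ.
  by rewrite (subsetP ZV) ?(subsetP AV).
apply/forall_inP => _ /imsetP[z zZ ->]; apply/forall_inP => _ /imsetP[z' z'Z ->].
apply/implyP => /= nzz'; have [fzA _] := fA z zZ; have [fz'A _] := fA z' z'Z.
rewrite disjoint_sym disjoint_set2 !inE !negb_or.
have nz : z' != z by apply: contraNneq nzz' => ->.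
rewrite nz (inj_in_eq fI) // nz /= andbT; apply/andP; split.
- by apply: contraTneq fzA => <-; rewrite (disjointFr dZA z'Z).
- by apply: contraTneq fz'A => ->; rewrite (disjointFr dZA zZ).
Qed.

Lemma MM_add_matching_into (V Z A : {set T}) (f : T -> T) :
  Z \subset V -> A \subset V -> [disjoint Z & A] -> matching_into e Z A f ->
  MM e (V :\: (Z :|: A)) + #|Z| <= MM e V.
Proof.
move=> ZV AV dZA mf; have [M0 M0m <-] := MM_attained (V :\: (Z :|: A)).
set M1 := [set (z, f z) | z in Z].
have outside p : p \in M0 -> (p.1 \notin Z :|: A) && (p.2 \notin Z :|: A).
  case/andP: M0m => /forall_inP/(_ p) + _ => /[apply] /and3P[].
  by rewrite !inE => /andP[-> _] /andP[-> _].
have disj p q : p \in M0 -> q \in M1 -> [disjoint [set p.1; p.2] & [set q.1; q.2]].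
  move=> /outside /andP[p1 p2] /imsetP[z zZ ->] /=; have [fzA _] := mf.1 z zZ.
  have out x : x \notin Z :|: A -> x \notin [set z; f z].
    by move=> hx; rewrite !inE; apply/norP; split; apply: contraNneq hx => ->;
       rewrite inE ?zZ ?fzA ?orbT.
  by rewrite disjoint_set2 !out.
have cardM1 : #|M1| = #|Z| by rewrite card_imset // => x y [].
have M01 : M0 :&: M1 = set0.
  apply/setP => p; rewrite !inE; apply/negP => /andP[/disj + pM1] => /(_ p pM1).
  by case: p pM1 => a b /imsetP[z _ [-> ->]]; rewrite disjoint_set2 !inE eqxx.
rewrite -cardM1 -cardsUI M01 cards0 addn0; apply: matching_le_MM.
apply: is_matchingU disj; first exact: is_matchingS (subsetDl _ _) M0m.
exact: is_matching_graph mf.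
Qed.

End Matchings.

Section Neighbourhoods.
Variables (T : finType) (e : rel T).

Lemma nbh_sub (V X : {set T}) : nbh e V X \subset V.
Proof. by apply/subsetP=> v; rewrite !inE => /andP[/andP[]]. Qed.

Lemma nbh_disjoint (V X : {set T}) : [disjoint X & nbh e V X].
Proof.
by rewrite disjoints_subset; apply/subsetP=> v; rewrite !inE => ->.
Qed.

Lemma independentS (V S Z : {set T}) :
  S \subset Z -> independent e V Z -> independent e V S.
Proof.
move=> sSZ /andP[ZV /forall_inP indZ]; rewrite /independent (subset_trans sSZ ZV).
apply/forall_inP=> u /(subsetP sSZ)/indZ/forall_inP ind.
by apply/forall_inP=> v /(subsetP sSZ)/ind.
Qed.

Lemma nbh_adj (V Z : {set T}) u v : independent e V Z ->
  u \in Z -> v \in V -> e u v -> v \in nbh e V Z.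
Proof.
move=> /andP[_ /forall_inP indZ] uZ vV euv; rewrite !inE vV andbT.
apply/andP; split; last by apply/existsP; exists u; rewrite uZ.
by apply: contraL euv => /(forall_inP (indZ u uZ)).
Qed.

Lemma card_nbh_partition (V Z : {set T}) : Z \subset V ->
  #|V| = (#|V :\: (Z :|: nbh e V Z)| + #|Z| + #|nbh e V Z|)%N.
Proof.
move=> ZV; rewrite -(cardsID (Z :|: nbh e V Z) V) (setIidPr _); last first.
  by rewrite subUset ZV nbh_sub.
by rewrite cardsU (disjoint_setI0 (nbh_disjoint V Z)) cards0 subn0 addnC addnA.
Qed.

End Neighbourhoods.

Local Open Scope ring_scope.

Section HalfIntegralRounding.
Variables (R : realType) (T : finType) (e : rel T) (W : {set T}).

Definition half_integral (x : T -> R) : Prop :=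
  forall v, v \in W -> x v \in [:: 0; 2^-1; 1].

Definition fractional (x : T -> R) : {set T} :=
  [set v in W | x v \notin [:: 0; 2^-1; 1]].

Definition away (x : T -> R) (v : T) : R := if x v < 2^-1 then -1 else 1.

Definition perturb (t : R) (x : T -> R) (v : T) : R :=
  if v \in fractional x then x v + t * away x v else x v.

Definition admissible (t : R) (x : T -> R) : Prop :=
  forall v, v \in fractional x -> 0 <= x v + t * away x v <= 1 /\
    (2^-1 < x v -> 2^-1 <= x v + t * away x v).

Lemma fractional_sub x : fractional x \subset W.
Proof. by apply/subsetP=> v; rewrite inE => /andP[]. Qed.

Lemma lp_obj_perturb t x :
  lp_obj W (perturb t x) = lp_obj W x + t * \sum_(v in fractional x) away x v.
Proof.
rewrite /lp_obj mulr_sumr.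
have -> : \sum_(v in fractional x) t * away x v =
          \sum_(v in W | v \in fractional x) t * away x v.
  by apply: eq_bigl => v; rewrite andb_idl // => /(subsetP (fractional_sub x)).
rewrite big_mkcondr -big_split /=; apply: eq_bigr => v _; rewrite /perturb.
by case: (v \in fractional x); rewrite ?addr0.
Qed.

Lemma fractional_perturb t x : fractional (perturb t x) \subset fractional x.
Proof.
apply/subsetP=> v; rewrite [in X in X -> _]inE /perturb.
by case: ifP => // /negbT; rewrite inE => /negP.
Qed.

Lemma fractional_bounds x v : lpvc_feasible e W x -> v \in fractional x ->
  [/\ 0 < x v, x v < 1 & x v != 2^-1].
Proof.
move=> [xb _]; rewrite inE !in_cons in_nil orbF !negb_or => /andP[vW /and3P[n0 nh n1]].
have /andP[x0 x1] := xb v vW.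
by rewrite nh lt_neqAle eq_sym n0 x0 lt_neqAle n1 x1.
Qed.

Lemma perturb_vertex x t w : lpvc_feasible e W x ->
  admissible t x ->
  w \in W ->
  let y := perturb t x in
  [/\ 0 <= y w <= 1, 2^-1 <= x w -> 2^-1 <= y w,
      x w < 2^-1 -> (0 < x w /\ y w = x w - t) \/ (x w = 0 /\ y w = 0) &
      2^-1 < x w -> (x w < 1 /\ y w = x w + t) \/ (x w = 1 /\ y w = 1)].
Proof.
move=> hx ht wW y; rewrite /y /perturb.
case: (boolP (w \in fractional x)) => wF.
  have [/andP[y0 y1] yh] := ht w wF; have [x0 x1 xh] := fractional_bounds hx wF.
  move: y0 y1 yh; rewrite /away; have [hw|hw] := ltP (x w) 2^-1 => y0 y1 yh.
    by split=> [|h|h|h]; [exact/andP | lra | left; split; lra | lra].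
  have {}hw : 2^-1 < x w by rewrite lt_neqAle eq_sym xh hw.
  by split=> [|h|h|h]; [exact/andP | exact: yh | lra | left; split; lra].
have : x w \in [:: 0; 2^-1; 1] by move: wF; rewrite inE wW negbK.
rewrite !in_cons in_nil orbF => /or3P[] /eqP ->.
- by split=> [|h|h|h]; [rewrite lexx ler01 | lra | right | lra].
- by split=> [|h|h|h]; [apply/andP; split; lra | lra | lra | lra].
- by split=> [|h|h|h]; [rewrite lexx ler01 | lra | lra | right].
Qed.

Lemma perturb_feasible x t : lpvc_feasible e W x ->
  admissible t x ->
  lpvc_feasible e W (perturb t x).
Proof.
move=> hx ht; split=> [w wW | u v uW vW euv]; first by have [] := perturb_vertex hx ht wW.
have [xb xe] := hx; have xuv := xe u v uW vW euv.
have /andP[xu0 xu1] := xb u uW; have /andP[xv0 xv1] := xb v vW.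
have [/andP[yu0 _] hu1 hu2 hu3] := perturb_vertex hx ht uW.
have [/andP[yv0 _] hv1 hv2 hv3] := perturb_vertex hx ht vW.
(* An endpoint below 1/2 forces the other one above 1/2, and two fractional
   endpoints on opposite sides of 1/2 move by opposite amounts. *)
lra.
Qed.

Definition room (out : bool) (x : T -> R) (v : T) : R :=
  if x v < 2^-1 then (if out then x v else 2^-1 - x v)
  else (if out then 1 - x v else x v - 2^-1).

Lemma room_ge0 out x v : lpvc_feasible e W x -> v \in fractional x -> 0 <= room out x v.
Proof.
move=> hx vF; have [x0 x1 _] := fractional_bounds hx vF.
by rewrite /room; case: ltP; case: (out); lra.
Qed.

Lemma perturb_room x (out : bool) v0 : lpvc_feasible e W x -> v0 \in fractional x ->
  (forall v, v \in fractional x -> room out x v0 <= room out x v) ->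
  let t := if out then room out x v0 else - room out x v0 in
  lpvc_feasible e W (perturb t x) /\ v0 \notin fractional (perturb t x).
Proof.
move=> hx v0F v0min t.
have d0 := room_ge0 out hx v0F.
split.
  apply: perturb_feasible => // v vF; have := v0min v vF.
  have [y0 y1 /lt_total/orP hv] := fractional_bounds hx vF.
  rewrite /t /away; move: d0; move: (room out x v0) => d d0.
  by rewrite /room; have [hlt|hlt] := ltP (x v) 2^-1; case: (out); lra.
rewrite inE negb_and negbK /perturb v0F /t /away /room !in_cons in_nil orbF.
apply/orP; right; apply/or3P.
by have [hlt|hlt] := ltP (x v0) 2^-1; case: (out);
  [apply: Or31 | apply: Or32 | apply: Or33 | apply: Or32]; apply/eqP; lra.
Qed.

(* Shifting every fractional value away from 1/2 by t changes the objective
   linearly in t; moving in the cheaper direction until the first fractional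
   value reaches 0, 1/2 or 1 removes it and creates no new fractional value. *)
Lemma perturb_step x : lpvc_feasible e W x -> fractional x != set0 ->
  exists y, [/\ lpvc_feasible e W y, (#|fractional y| < #|fractional x|)%N
              & lp_obj W y <= lp_obj W x].
Proof.
move=> hx /set0Pn[w wF].
set c := \sum_(v in fractional x) away x v.
pose out := c <= 0.
have [v0 v0F v0min] := arg_minP (room out x) wF.
have [hy v0y] := perturb_room hx v0F v0min.
exists (perturb (if out then room out x v0 else - room out x v0) x); split=> //.
  apply: proper_card; rewrite properE fractional_perturb.
  by apply/subsetPn; exists v0.
rewrite lp_obj_perturb -/c gerDl; have := room_ge0 out hx v0F.
by rewrite /out; case: (leP c 0) => hc; nra.
Qed.

Theorem lpvc_half_integral x : lpvc_feasible e W x ->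
  exists y, [/\ lpvc_feasible e W y, half_integral y & lp_obj W y <= lp_obj W x].
Proof.
have [n] := ubnP #|fractional x|; elim: n x => // n IH x ltFn hx.
have [F0|/(perturb_step hx)[y [hy ltFy oy]]] := eqVneq (fractional x) set0.
  exists x; split=> // v vW.
  have : v \notin fractional x by rewrite F0 inE.
  by rewrite inE vW negbK.
have [z [hz zh oz]] := IH y (leq_trans ltFy ltFn) hy.
by exists z; split=> //; apply: le_trans oz oy.
Qed.

End HalfIntegralRounding.

Section ResidualLP.
Variables (R : realType) (T : finType) (e : rel T).

Definition nbh_extension (V Z : {set T}) (x : T -> R) (v : T) : R :=
  if v \in nbh e V Z then 1 else if v \in Z then 0 else x v.

Lemma lp_obj_const (W : {set T}) (c : R) : lp_obj W (fun _ => c) = #|W|%:R * c.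
Proof. by rewrite /lp_obj sumr_const mulr_natl. Qed.

Lemma half_feasible (W : {set T}) : lpvc_feasible e W (fun _ => 2^-1 : R).
Proof. by split=> [v _|u v _ _ _]; [apply/andP; split|]; lra. Qed.

Lemma lp_obj_optimal_eq (W : {set T}) (x y : T -> R) :
  lpvc_optimal e W x -> lpvc_optimal e W y -> lp_obj W x = lp_obj W y.
Proof. by move=> [hx ox] [hy oy]; apply/le_anti; rewrite ox ?oy. Qed.

Lemma half_unique_lt (V : {set T}) (y : T -> R) v :
  half_unique_opt e R V -> lpvc_feasible e V y -> v \in V -> y v != 2^-1 ->
  lp_obj V (fun _ => 2^-1) < lp_obj V y.
Proof.
move=> [[_ ho] hu] hy vV; apply: contraNT; rewrite -leNgt => le_y.
have opt_y : lpvc_optimal e V y.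
  by split=> // z hz; apply: le_trans le_y (ho z hz).
by rewrite (hu y opt_y v vV).
Qed.

Lemma half_integral_lp_obj (W : {set T}) (y : T -> R) :
  half_integral W y -> exists n : nat, 2 * lp_obj W y = n%:R.
Proof.
move=> hy; apply/natrP; rewrite /lp_obj mulr_sumr; apply: rpred_sum => v vW.
move: (hy v vW); rewrite !in_cons in_nil orbF => /or3P[] /eqP->.
- by rewrite mulr0 rpred0.
- by rewrite mulfV ?rpred1 ?pnatr_eq0.
- by rewrite mulr1 natr_nat.
Qed.

Lemma nbh_extension_feasible (V Z : {set T}) (x : T -> R) :
  symmetric e -> independent e V Z ->
  lpvc_feasible e (V :\: (Z :|: nbh e V Z)) x ->
  lpvc_feasible e V (nbh_extension V Z x).
Proof.
move=> esym indZ [xb xe]; set y := nbh_extension V Z x.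
have yN w : w \in nbh e V Z -> y w = 1 by rewrite /y /nbh_extension => ->.
have yZ w : w \in Z -> y w = 0.
  by move=> wZ; rewrite /y /nbh_extension wZ (disjointFr (nbh_disjoint e V Z) wZ).
have yV' w : w \in V :\: (Z :|: nbh e V Z) -> y w = x w.
  by rewrite /y /nbh_extension !inE negb_or => /andP[/andP[/negbTE-> /negbTE->] _].
have part w : w \in V -> [\/ w \in nbh e V Z, w \in Z | w \in V :\: (Z :|: nbh e V Z)].
  move=> wV; case: (boolP (w \in nbh e V Z)) => wN; first exact: Or31.
  case: (boolP (w \in Z)) => wZ; first exact: Or32.
  by apply: Or33; rewrite in_setD in_setU negb_or wZ wN.
have yb w : w \in V -> 0 <= y w <= 1.
  by case/part => [/yN|/yZ|wV']; [move->; rewrite ler01 lexx | move->; rewrite lexx ler01 |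
    rewrite yV' //; apply: xb].
split=> // u v uV vV euv.
have /andP[yu0 _] := yb u uV; have /andP[yv0 _] := yb v vV.
have [uN|uZ|uV'] := part u uV; first by rewrite yN // lerDl.
  by rewrite yZ // yN ?add0r ?lexx // (nbh_adj indZ uZ vV euv).
have [vN|vZ|vV'] := part v vV; first by rewrite (yN v) // lerDr.
  have evu : e v u by rewrite esym.
  by move: uV'; rewrite in_setD in_setU (nbh_adj indZ vZ uV evu) orbT.
by rewrite !yV' //; exact: xe uV' vV' euv.
Qed.

Lemma lp_obj_nbh_extension (V Z : {set T}) (x : T -> R) : Z \subset V ->
  lp_obj V (nbh_extension V Z x) =
  #|nbh e V Z|%:R + lp_obj (V :\: (Z :|: nbh e V Z)) x.
Proof.
move=> ZV; rewrite /lp_obj (big_setID (nbh e V Z)) (setIidPr (nbh_sub e V Z)) /=.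
rewrite [X in _ + X](big_setID Z) /= setDDl [nbh e V Z :|: Z]setUC.
rewrite (setIidPr _) ?subsetD ?ZV ?nbh_disjoint //.
rewrite [X in _ + (X + _)]big1 => [|v vZ]; last first.
  by rewrite /nbh_extension vZ (disjointFr (nbh_disjoint e V Z) vZ).
rewrite add0r -sumr_const; congr (_ + _); apply: eq_bigr => v.
  by rewrite /nbh_extension => ->.
by rewrite /nbh_extension !inE negb_or => /andP[/andP[/negbTE-> /negbTE->] _].
Qed.

Lemma surplus_ge0 (V Z : {set T}) :
  symmetric e -> lpvc_optimal e V (fun _ => 2^-1 : R) -> independent e V Z ->
  (#|Z| <= #|nbh e V Z|)%N.
Proof.
move=> esym [_ ho] indZ; have ZV : Z \subset V by case/andP: indZ.
have := ho _ (nbh_extension_feasible esym indZ (half_feasible _)).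
rewrite lp_obj_nbh_extension // !lp_obj_const (card_nbh_partition e ZV) !natrD.
by rewrite -(ler_nat R); lra.
Qed.

Lemma hall_condition_nbh (V Z : {set T}) :
  symmetric e -> lpvc_optimal e V (fun _ => 2^-1 : R) -> independent e V Z ->
  hall_condition e Z (nbh e V Z).
Proof.
move=> esym ho indZ S sSZ.
apply: leq_trans (surplus_ge0 esym ho (independentS sSZ indZ)) (subset_leq_card _).
apply/subsetP=> v; rewrite [in X in X -> _]inE.
move=> /andP[/setDP[vV _] /existsP[u /andP[uS euv]]].
rewrite inE (nbh_adj indZ (subsetP sSZ u uS) vV euv).
by apply/existsP; exists u; rewrite uS.
Qed.

Lemma residual_lp_bound (V Z : {set T}) (x : T -> R) :
  symmetric e -> half_unique_opt e R V -> independent e V Z -> Z != set0 ->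
  lpvc_feasible e (V :\: (Z :|: nbh e V Z)) x ->
  (#|V| + 1)%:R <= 2 * (#|nbh e V Z|%:R + lp_obj (V :\: (Z :|: nbh e V Z)) x).
Proof.
move=> esym hU indZ /set0Pn[z0 z0Z] hx; have ZV : Z \subset V by case/andP: indZ.
have [y [hy yh oy]] := lpvc_half_integral hx.
have [n hn] := half_integral_lp_obj yh.
have y_z0 : nbh_extension V Z y z0 != 2^-1.
  by rewrite /nbh_extension z0Z (disjointFr (nbh_disjoint e V Z) z0Z); apply/eqP; lra.
have := half_unique_lt hU (nbh_extension_feasible esym indZ hy) (subsetP ZV z0 z0Z) y_z0.
rewrite lp_obj_const lp_obj_nbh_extension // => lt_half.
have lt_n : (#|V| < 2 * #|nbh e V Z| + n)%N.
  by rewrite -(ltr_nat R) natrD natrM -hn; lra.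
have : ((#|V| + 1)%:R <= (2 * #|nbh e V Z| + n)%:R :> R) by rewrite ler_nat addn1.
by rewrite !natrD -hn; lra.
Qed.

End ResidualLP.

Theorem lemma8 (R : realType) (T : finType) (e : rel T) (V Z : {set T}) (k : nat)
  (LPG LPG' : R) :
  simple_graph e ->
  half_unique_opt e R V ->
  independent e V Z ->
  (#|nbh e V Z| = #|Z| + 1)%N ->
  ~~ independent e V (nbh e V Z) ->
  is_LP_value e V LPG ->
  is_LP_value e (V :\: (Z :|: nbh e V Z)) LPG' ->
  ((k%:Z - (#|nbh e V Z|)%:Z)%:~R + (MM e (V :\: (Z :|: nbh e V Z)))%:R - 2 * LPG'
     <= (k%:R + (MM e V)%:R - 2 * LPG :> R)).
Proof.
(* Safeness does not need that N(Z) is not independent. *)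
move=> [esym _] hU indZ hcard _ [x xopt <-] [x' x'opt <-].
have ZV : Z \subset V by case/andP: indZ.
have Z0 : Z != set0.
  have /card_gt0P[v] : (0 < #|nbh e V Z|)%N by rewrite hcard addn1.
  by rewrite inE => /andP[_ /existsP[u /andP[uZ _]]]; apply/set0Pn; exists u.
have LPV : lp_obj V x = #|V|%:R * 2^-1.
  by rewrite (lp_obj_optimal_eq xopt hU.1) lp_obj_const.
have [f mf] := hall (hall_condition_nbh esym hU.1 indZ).
have := MM_add_matching_into ZV (nbh_sub e V Z) (nbh_disjoint e V Z) mf.
rewrite -(ler_nat R) natrD => hMM.
have hLP := residual_lp_bound esym hU indZ Z0 x'opt.1.
have /(congr1 (fun n => n%:R : R)) := card_nbh_partition e ZV; rewrite !natrD => hV.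
move/(congr1 (fun n => n%:R : R)): hcard; rewrite natrD => hN.
by rewrite intrB LPV; lra.
Qed.
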